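(* Let $\psi$ be a functional property of generators and $L \subseteq \mathbb{N}$ a restricted language capturing $\psi$. If $\psi$ is undecidable, there can be no automated (computable) process which, given a generator $g'$ satisfying $\psi$, reworks it into an equivalent generator $g \in L$ (i.e. with $\varphi_g = \varphi_{g'}$).
   Context: Programs (generators) are identified with natural numbers in a fixed universal programming language; $\varphi_g$ is the partial computable function computed by $g$. A property $\psi \subseteq \mathbb{N}$ is functional if whenever $\varphi_g = \varphi_{g'}$, $\psi(g) \leftrightarrow \psi(g')$. A language $L \subseteq \mathbb{N}$ captures $\psi$ if $L$ is decidable, every $g \in L$ satisfies $\psi$, and for every $g' \in \mathbb{N}$ satisfying $\psi$ there is $g \in L$ with $\varphi_g = \varphi_{g'}$. *)

From HB Require Import structures.
From mathcomp Require Import all_boot.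
Set Implicit Arguments. Unset Strict Implicit. Unset Printing Implicit Defensive.

Definition cpair (a b : nat) : nat := ((a + b) * (a + b).+1) %/ 2 + b.

Inductive prog : Type :=
| PZero | PSucc | PId | PFst | PSnd
| PPair of prog & prog
| PComp of prog & prog        (* PComp f g = f o g *)
| PPrim of prog & prog        (* primitive recursion on the second component *)
| PMu of prog.

Fixpoint prog_enc (p : prog) : GenTree.tree nat :=
  match p with
  | PZero => GenTree.Node 0 [::]
  | PSucc => GenTree.Node 1 [::]
  | PId => GenTree.Node 2 [::]
  | PFst => GenTree.Node 3 [::]
  | PSnd => GenTree.Node 4 [::]
  | PPair f g => GenTree.Node 5 [:: prog_enc f; prog_enc g]
  | PComp f g => GenTree.Node 6 [:: prog_enc f; prog_enc g]
  | PPrim f g => GenTree.Node 7 [:: prog_enc f; prog_enc g]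
  | PMu f => GenTree.Node 8 [:: prog_enc f]
  end.

Fixpoint prog_dec (t : GenTree.tree nat) : option prog :=
  match t with
  | GenTree.Node 0 [::] => Some PZero
  | GenTree.Node 1 [::] => Some PSucc
  | GenTree.Node 2 [::] => Some PId
  | GenTree.Node 3 [::] => Some PFst
  | GenTree.Node 4 [::] => Some PSnd
  | GenTree.Node 5 [:: a; b] =>
      match prog_dec a, prog_dec b with Some f, Some g => Some (PPair f g) | _, _ => None end
  | GenTree.Node 6 [:: a; b] =>
      match prog_dec a, prog_dec b with Some f, Some g => Some (PComp f g) | _, _ => None end
  | GenTree.Node 7 [:: a; b] =>
      match prog_dec a, prog_dec b with Some f, Some g => Some (PPrim f g) | _, _ => None end
  | GenTree.Node 8 [:: a] =>
      match prog_dec a with Some f => Some (PMu f) | None => None end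
  | _ => None
  end.

Lemma prog_encK : pcancel prog_enc prog_dec.
Proof. by elim=> //= [f -> g ->|f -> g ->|f -> g ->|f ->]. Qed.

HB.instance Definition _ := Equality.copy prog (pcan_type prog_encK).
HB.instance Definition _ := Countable.copy prog (pcan_type prog_encK).

Inductive eval : prog -> nat -> nat -> Prop :=
| ev_zero x : eval PZero x 0
| ev_succ x : eval PSucc x x.+1
| ev_id x : eval PId x x
| ev_fst a b : eval PFst (cpair a b) a
| ev_snd a b : eval PSnd (cpair a b) b
| ev_pair f g x a b : eval f x a -> eval g x b -> eval (PPair f g) x (cpair a b)
| ev_comp f g x y z : eval g x y -> eval f y z -> eval (PComp f g) x z
| ev_prim0 f g x y : eval f x y -> eval (PPrim f g) (cpair x 0) y
| ev_primS f g x n y z :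
    eval (PPrim f g) (cpair x n) y -> eval g (cpair x (cpair n y)) z ->
    eval (PPrim f g) (cpair x n.+1) z
| ev_mu f x n :
    eval f (cpair x n) 0 ->
    (forall m, m < n -> exists k, eval f (cpair x m) k.+1) ->
    eval (PMu f) x n.

(* phi g : the partial computable function computed by generator (program
   number) g, as its graph. Numbers that do not decode to a program compute
   the nowhere-defined function. *)
Definition phi (g : nat) (x y : nat) : Prop :=
  match (unpickle g : option prog) with
  | Some p => eval p x y
  | None => False
  end.

Definition phi_eq (g g' : nat) : Prop := forall x y, phi g x y <-> phi g' x y.

Definition decidable_set (A : nat -> Prop) : Prop :=
  exists e, forall x, (A x -> phi e x 1) /\ (~ A x -> phi e x 0).

Definition computable_fun (r : nat -> nat) : Prop :=
  exists e, forall x, phi e x (r x).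

Definition functional_prop (psi : nat -> Prop) : Prop :=
  forall g g', phi_eq g g' -> (psi g <-> psi g').

Definition captures (L psi : nat -> Prop) : Prop :=
  [/\ decidable_set L,
      (forall g, L g -> psi g) &
      (forall g', psi g' -> exists g, L g /\ phi_eq g g')].

(* An automated process reworking psi-generators into equivalent generators of L:
   a total computable r which, on every generator satisfying psi, outputs an
   equivalent generator in L, and which never outputs a member of L that is
   not equivalent to its input (outputs outside L signal failure). *)
Definition reworker (L psi : nat -> Prop) (r : nat -> nat) : Prop :=
  [/\ computable_fun r,
      (forall g', psi g' -> L (r g') /\ phi_eq (r g') g') &
      (forall g', L (r g') -> phi_eq (r g') g')].

(* A reworker r decides psi by reduction: for every g, psi g holds iff r g lies
   in L, because r maps psi-generators into L and, conversely, whenever r g lies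
   in L it is equivalent to g, hence satisfies psi by functionality.  Since L is
   decidable and r is computable, running the decider of L after r decides psi. *)
From mathcomp Require Import all_boot.

Lemma phi_pickle (p : prog) : phi (pickle p) = eval p.
Proof. by rewrite /phi pickleK. Qed.

Lemma computable_fun_prog r :
  computable_fun r -> exists p, forall x, eval p x (r x).
Proof.
case=> e Her; case Ee: (unpickle e) => [p|].
  by exists p => x; have := Her x; rewrite /phi Ee.
by have := Her 0; rewrite /phi Ee.
Qed.

Lemma decidable_set_prog A :
  decidable_set A -> exists p, forall x, (A x -> eval p x 1) /\ (~ A x -> eval p x 0).
Proof.
case=> e HA; case Ee: (unpickle e) => [p|].
  by exists p => x; have := HA x; rewrite /phi Ee.
(* a code decoding to no program is nowhere defined, so it answers neither 1 nor 0 *)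
by have := HA 0; rewrite /phi Ee; tauto.
Qed.

Lemma decidable_set_comp A r :
  decidable_set A -> computable_fun r -> decidable_set (fun x => A (r x)).
Proof.
move=> /decidable_set_prog[pA HA] /computable_fun_prog[pr Hr].
exists (pickle (PComp pA pr)) => x; rewrite !phi_pickle.
by split=> [/(HA (r x)).1 | /(HA (r x)).2]; apply: ev_comp.
Qed.

Lemma decidable_set_ext {A B : nat -> Prop} :
  (forall x, A x <-> B x) -> decidable_set A -> decidable_set B.
Proof.
move=> AB [e He]; exists e => x; have [inA notinA] := He x.
by split=> [/AB/inA | notB]; last by apply: notinA => /AB.
Qed.

Lemma reworker_in_L_iff {L psi r} :
  functional_prop psi -> (forall g, L g -> psi g) -> reworker L psi r ->
  forall g, L (r g) <-> psi g.
Proof.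
move=> psi_fun Lpsi [_ r_psi r_L] g; split=> [Lrg | /r_psi[] //].
by apply/(psi_fun _ _ (r_L g Lrg)); apply: Lpsi.
Qed.

Theorem mainTheorem7 (psi L : nat -> Prop) :
  functional_prop psi -> captures L psi -> ~ decidable_set psi ->
  ~ exists r : nat -> nat, reworker L psi r.
Proof.
move=> psi_fun [decL Lpsi _] undec_psi [r rw].
apply/undec_psi/(@decidable_set_ext (fun g => L (r g))).
  exact: reworker_in_L_iff psi_fun Lpsi rw.
by apply: decidable_set_comp => //; case: rw.
Qed.
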